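(* Let $q=2^h$, let $\alpha\in{\rm GF}(q)$ be such that $X^2+X+\alpha$ is irreducible over ${\rm GF}(q)$, and let $G=\{M_{a,b,c,d}: a\in{\rm GF}(q)\setminus\{0\},\ b,c,d\in{\rm GF}(q),\ c^2+cd+\alpha d^2=1\}$, where $$M_{a,b,c,d}=\begin{pmatrix}1&0&0&0&0\\0&ac&\alpha ad&bc&\alpha bd\\0&ad&a(c+d)&bd&b(c+d)\\0&0&0&a^{-1}c&\alpha a^{-1}d\\0&0&0&a^{-1}d&a^{-1}(c+d)\end{pmatrix},$$ acting on the points (column vectors) of ${\rm PG}(4,q)$ by left multiplication. Then, under the action of $G$ on the lines of ${\rm PG}(4,q)$, there are $q^2-q$ distinct line-orbits of size $q^3-q$, each consisting of pairwise disjoint lines. *)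

From HB Require Import structures.
From mathcomp Require Import all_boot all_order all_algebra all_fingroup all_field.
Set Implicit Arguments. Unset Strict Implicit. Unset Printing Implicit Defensive.
Import Order.TTheory GRing.Theory.
Local Open Scope ring_scope.

Section Defs.
Variable F : finFieldType.

Definition Mabcd (alpha a b c d : F) : 'M[F]_5 :=
  \matrix_(i < 5, j < 5)
    (nth [::]
      [:: [:: 1; 0; 0; 0; 0];
          [:: 0; a * c; alpha * a * d; b * c; alpha * b * d];
          [:: 0; a * d; a * (c + d); b * d; b * (c + d)];
          [:: 0; 0; 0; a^-1 * c; alpha * a^-1 * d];
          [:: 0; 0; 0; a^-1 * d; a^-1 * (c + d)] ] i)`_j.

Definition Ggroup (alpha : F) : {set 'M[F]_5} :=
  [set M | [exists a : F, exists b : F, exists c : F, exists d : F,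
     [&& a != 0, c ^+ 2 + c * d + alpha * d ^+ 2 == 1 & M == Mabcd alpha a b c d]]].

(* A line of PG(4,q), represented by the 2-dimensional subspace of F^5
   (column vectors) whose nonzero vectors are the points of the line. *)
Definition is_line (S : {set 'cV[F]_5}) : Prop :=
  exists u v : 'cV[F]_5, \rank (row_mx u v) = 2%N /\
    S = [set a *: u + b *: v | a : F, b : F].

Definition act_line (M : 'M[F]_5) (S : {set 'cV[F]_5}) : {set 'cV[F]_5} :=
  [set M *m x | x in S].

Definition line_orbit (G : {set 'M[F]_5}) (S : {set 'cV[F]_5}) :
  {set {set 'cV[F]_5}} := [set act_line M S | M in G].

(* Two lines of PG(4,q) are disjoint iff the subspaces meet only in 0. *)
Definition disjoint_lines (S T : {set 'cV[F]_5}) : Prop :=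
  S :&: T = [set 0].

End Defs.

From HB Require Import structures.
From mathcomp Require Import all_boot all_order all_algebra all_fingroup all_field.
From mathcomp Require Import ring zify.
Set Implicit Arguments. Unset Strict Implicit. Unset Printing Implicit Defensive.
Import GRing.Theory.
Local Open Scope ring_scope.

(* Let F(w) = GF(q^2) with w^2 + w + alpha = 0; qnorm alpha c d = c^2 + c d + alpha d^2 is the
   norm of c + d w.  M_{a,b,c,d} multiplies x3 + x4 w by (c + d w) / a and maps x1 + x2 w to
   (c + d w)(a (x1 + x2 w) + b (x3 + x4 w)), so G acts freely on the vectors with (x3, x4) <> 0;
   it also fixes x0 and the quadratic form x1 x4 + x2 x3.  For r <> 0 the line
   L(p, r) = <(1, p, 0, 0, r), (0, 0, 1, 1, 0)> consists of the vectors (s, s p, t, t, s r), with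
   form value s^2 p r + t^2, and squaring is injective in characteristic 2.  Hence
   M1 y1 = M2 y2 <> 0 with y1, y2 in L(p, r) forces y1 = y2 and then M1 = M2: the |G| = q^3 - q
   images of L(p, r) are pairwise disjoint, and as every L(p', r') meets L(p, r) in
   (0, 0, 1, 1, 0), the orbits of the q (q - 1) lines L(p, r) are distinct. *)

Definition qnorm (R : pzRingType) (alpha c d : R) := c ^+ 2 + c * d + alpha * d ^+ 2.

Lemma qnormZ (R : comPzRingType) (alpha mu c d : R) :
  qnorm alpha (mu * c) (mu * d) = mu ^+ 2 * qnorm alpha c d.
Proof. by rewrite /qnorm; ring. Qed.

Section QuadraticNorm.

Variable F : fieldType.
Hypothesis F2 : 2%N \in [pchar F].

Lemma sqrf_inj : injective (fun x : F => x ^+ 2).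
Proof.
move=> x y /=; rewrite -!(pFrobenius_autE F2).
exact: (fmorph_inj (pFrobenius_aut F2 : {rmorphism F -> F})).
Qed.

Let two0 : 2%:R = 0 :> F := pcharf0 F2.

Variable alpha : F.
Hypothesis alpha_irr : irreducible_poly ('X^2 + 'X + alpha%:P).

Lemma quad_neq0 k : k ^+ 2 + k + alpha != 0.
Proof.
apply: contraTneq isT => k_root.
have: ('X - k%:P) %| 'X^2 + 'X + alpha%:P.
  by rewrite dvdp_XsubCl /root !hornerE k_root.
move/(alpha_irr.2 _); rewrite size_XsubC => /(_ isT)/eqp_size.
by rewrite size_XsubC -addrA size_polyDl ?size_polyXn // size_XaddC.
Qed.

Lemma qnorm_eq0 c d : (qnorm alpha c d == 0) = (c == 0) && (d == 0).
Proof.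
have [-> | d_neq0] := eqVneq d 0.
  by rewrite /qnorm mulr0 expr0n /= mulr0 !addr0 expf_eq0 andbT.
rewrite andbF; apply: negbTE; have := quad_neq0 (c / d); apply: contra => /eqP qn0.
have -> : (c / d) ^+ 2 + c / d + alpha = qnorm alpha c d / d ^+ 2.
  by rewrite /qnorm; field.
by rewrite qn0 mul0r.
Qed.

Lemma qnorm1_scale mu c d :
  qnorm alpha c d = 1 -> qnorm alpha (mu * c) (mu * d) = 1 -> mu = 1.
Proof.
move=> qn1; rewrite qnormZ qn1 mulr1 => mu2.
by apply: sqrf_inj; rewrite /= mu2 expr1n.
Qed.

(* The hypotheses say (P + Q w)(x + y w) = 0; multiply by the conjugate x + y + y w. *)
Lemma qnorm_mul_eq0 x y P Q : qnorm alpha x y != 0 ->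
  x * P + alpha * y * Q = 0 -> y * P + (x + y) * Q = 0 -> P = 0 /\ Q = 0.
Proof.
move=> qn_neq0 e1 e2.
have EP : qnorm alpha x y * P =
    (x + y) * (x * P + alpha * y * Q) + alpha * y * (y * P + (x + y) * Q).
  by rewrite /qnorm; ring: two0.
have EQ : qnorm alpha x y * Q =
    x * (y * P + (x + y) * Q) + y * (x * P + alpha * y * Q).
  by rewrite /qnorm; ring: two0.
rewrite e1 e2 !mulr0 addr0 in EP EQ.
by split; apply/eqP; [move/eqP: EP | move/eqP: EQ]; rewrite mulf_eq0 (negbTE qn_neq0).
Qed.

(* Rational parametrisation of the conic qnorm = 1 by the pencil of lines through (1, 0). *)
Definition qnorm1_param (o : option F) : F * F :=
  if o is Some k then let s := (k ^+ 2 + k + alpha)^-1 in (1 + k * s, s) else (1, 0).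

Lemma qnorm1_param_inj : injective qnorm1_param.
Proof.
have s_neq0 k : (k ^+ 2 + k + alpha)^-1 != 0 by rewrite invr_eq0 quad_neq0.
case=> [k|] [k'|] //= [].
- by move=> + e2; rewrite e2 => /addrI /(mulIf (s_neq0 k')) ->.
- by move=> _ /eqP; rewrite (negbTE (s_neq0 k)).
- by move=> _ /esym /eqP; rewrite (negbTE (s_neq0 k')).
Qed.

Lemma qnorm1_param_qnorm o :
  qnorm alpha (qnorm1_param o).1 (qnorm1_param o).2 = 1.
Proof.
case: o => [k|] /=; last by rewrite /qnorm; ring.
set s := _^-1; have sq1 : s * (k ^+ 2 + k + alpha) = 1 by rewrite mulVf ?quad_neq0.
have -> : qnorm alpha (1 + k * s) s = 1 + s + s * (s * (k ^+ 2 + k + alpha)).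
  by rewrite /qnorm; ring: two0.
by rewrite sq1 mulr1 -addrA (addrr_pchar2 F2) addr0.
Qed.

Lemma qnorm1_paramP c d :
  qnorm alpha c d = 1 -> exists o, qnorm1_param o = (c, d).
Proof.
move=> qn1; have [d0 | d_neq0] := eqVneq d 0.
  exists None; rewrite d0 in qn1 *; congr (_, _).
  by apply: sqrf_inj; rewrite /= expr1n -qn1 /qnorm; ring.
exists (Some ((c + 1) / d)); rewrite /=; set k := (c + 1) / d.
have -> : k ^+ 2 + k + alpha = d^-1.
  apply: (mulIf (expf_neq0 2 d_neq0)).
  have -> : (k ^+ 2 + k + alpha) * d ^+ 2 = qnorm alpha c d + 1 + d.
    by rewrite /k /qnorm; field: two0.
  by rewrite qn1 (addrr_pchar2 F2) add0r; field.
by rewrite invrK /k mulfVK // addrCA (addrr_pchar2 F2) addr0.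
Qed.

End QuadraticNorm.

Lemma card_qnorm1 (F : finFieldType) (alpha : F) :
  2%N \in [pchar F] -> irreducible_poly ('X^2 + 'X + alpha%:P) ->
  #|[set cd : F * F | qnorm alpha cd.1 cd.2 == 1]| = #|F|.+1.
Proof.
move=> F2 alpha_irr.
have -> : [set cd : F * F | qnorm alpha cd.1 cd.2 == 1] = qnorm1_param alpha @: setT.
  apply/setP => -[c d]; rewrite inE; apply/eqP/imsetP => [/(qnorm1_paramP F2) | ].
    by case=> o eo; exists o.
  by case=> o _ ->; apply: qnorm1_param_qnorm.
by rewrite card_imset ?cardsT ?card_option //; apply: qnorm1_param_inj.
Qed.

Section Col5.

Variable R : pzRingType.

Definition cv5 (x0 x1 x2 x3 x4 : R) : 'cV[R]_5 :=
  \col_(i < 5) [:: x0; x1; x2; x3; x4]`_i.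

Lemma cv5_inj x0 x1 x2 x3 x4 y0 y1 y2 y3 y4 :
  cv5 x0 x1 x2 x3 x4 = cv5 y0 y1 y2 y3 y4 ->
  [/\ x0 = y0, x1 = y1, x2 = y2, x3 = y3 & x4 = y4].
Proof.
move/colP => e; have ei k (lt_k5 : (k < 5)%N) := e (Ordinal lt_k5).
by move: (ei 0%N isT) (ei 1%N isT) (ei 2%N isT) (ei 3%N isT) (ei 4%N isT); rewrite !mxE.
Qed.

Lemma cv5_lin s t x0 x1 x2 x3 x4 y0 y1 y2 y3 y4 :
  s *: cv5 x0 x1 x2 x3 x4 + t *: cv5 y0 y1 y2 y3 y4 =
  cv5 (s * x0 + t * y0) (s * x1 + t * y1) (s * x2 + t * y2)
      (s * x3 + t * y3) (s * x4 + t * y4).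
Proof. by apply/colP => -[[|[|[|[|[|i]]]]] lt_i5]; rewrite !mxE. Qed.

Lemma cv5_0 : cv5 0 0 0 0 0 = 0.
Proof. by apply/colP => -[[|[|[|[|[|i]]]]] lt_i5]; rewrite !mxE. Qed.

End Col5.

Section MatrixGroup.

Variables (F : finFieldType) (alpha : F).

Lemma Mabcd_mul a b c d x0 x1 x2 x3 x4 :
  Mabcd alpha a b c d *m cv5 x0 x1 x2 x3 x4 =
  cv5 x0 (a * c * x1 + alpha * a * d * x2 + b * c * x3 + alpha * b * d * x4)
         (a * d * x1 + a * (c + d) * x2 + b * d * x3 + b * (c + d) * x4)
         (a^-1 * c * x3 + alpha * a^-1 * d * x4)
         (a^-1 * d * x3 + a^-1 * (c + d) * x4).
Proof.
apply/colP => i; rewrite !mxE !big_ord_recl big_ord0 !mxE /=.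
by case: i => -[|[|[|[|[|i]]]]] lt_i5 //=; ring.
Qed.

Lemma Mabcd1 : Mabcd alpha 1 0 1 0 = 1%:M.
Proof.
apply/matrixP => -[[|[|[|[|[|i]]]]] lt_i5] -[[|[|[|[|[|j]]]]] lt_j5] //;
  by rewrite !mxE /= ?invr1; ring.
Qed.

Lemma GgroupP M :
  reflect (exists a b c d, [/\ a != 0, qnorm alpha c d = 1 & M = Mabcd alpha a b c d])
          (M \in Ggroup alpha).
Proof.
rewrite inE; apply: (iffP existsP) => [[a /existsP [b /existsP [c /existsP [d]]]] | ].
  by case/and3P => a_neq0 /eqP qn1 /eqP ->; exists a, b, c, d.
case=> a [b [c [d [a_neq0 qn1 ->]]]]; exists a.
apply/existsP; exists b; apply/existsP; exists c; apply/existsP; exists d.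
by rewrite a_neq0 eqxx andbT; apply/eqP.
Qed.

Lemma Ggroup1 : 1%:M \in Ggroup alpha.
Proof.
by apply/GgroupP; exists 1, 0, 1, 0; rewrite oner_neq0 Mabcd1 /qnorm; split => //; ring.
Qed.

Hypothesis F2 : 2%N \in [pchar F].

Lemma Ggroup_mul_cv5 M x0 x1 x2 x3 x4 : M \in Ggroup alpha ->
  exists y1 y2 y3 y4, M *m cv5 x0 x1 x2 x3 x4 = cv5 x0 y1 y2 y3 y4 /\
                      y1 * y4 + y2 * y3 = x1 * x4 + x2 * x3.
Proof.
have two0 : 2%:R = 0 :> F := pcharf0 F2.
case/GgroupP => a [b [c [d [a_neq0 qn1 ->]]]]; rewrite Mabcd_mul.
do 4 eexists; split; first reflexivity.
transitivity (qnorm alpha c d * (a / a) * (x1 * x4 + x2 * x3)).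
  by rewrite /qnorm; ring: two0.
by rewrite qn1 divff // !mul1r.
Qed.

Hypothesis alpha_irr : irreducible_poly ('X^2 + 'X + alpha%:P).

Lemma Mabcd_free a1 b1 c1 d1 a2 b2 c2 d2 x0 x1 x2 x3 x4 :
  a1 != 0 -> a2 != 0 -> qnorm alpha c1 d1 = 1 -> qnorm alpha c2 d2 = 1 ->
  (x3 != 0) || (x4 != 0) ->
  Mabcd alpha a1 b1 c1 d1 *m cv5 x0 x1 x2 x3 x4 =
    Mabcd alpha a2 b2 c2 d2 *m cv5 x0 x1 x2 x3 x4 ->
  (a1, b1, c1, d1) = (a2, b2, c2, d2).
Proof.
move=> a1_neq0 a2_neq0 qn1 qn2 x34_neq0.
rewrite !Mabcd_mul => /cv5_inj [_ e1 e2 e3 e4].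
have qnx_neq0 : qnorm alpha x3 x4 != 0 by rewrite qnorm_eq0 // negb_and.
have [/subr0_eq ec /subr0_eq ed] : c1 / a1 - c2 / a2 = 0 /\ d1 / a1 - d2 / a2 = 0.
  apply: (qnorm_mul_eq0 F2 qnx_neq0).
    by move/eqP: e3; rewrite -subr_eq0 => /eqP <-; ring.
  by move/eqP: e4; rewrite -subr_eq0 => /eqP <-; ring.
have ea : a1 = a2.
  suff mu1 : a1 / a2 = 1 by rewrite -[a1](divfK a2_neq0) mu1 mul1r.
  apply: (qnorm1_scale F2 qn2); rewrite -qn1; congr qnorm.
    by rewrite -[c1](divfK a1_neq0) ec; ring.
  by rewrite -[d1](divfK a1_neq0) ed; ring.
subst a2; have a1V_neq0 : a1^-1 != 0 by rewrite invr_eq0.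
move: ec ed; rewrite ![_ / a1]mulrC => /(mulfI a1V_neq0) ec /(mulfI a1V_neq0) ed.
subst c2 d2; have [eb1 eb2] : (b1 - b2) * c1 = 0 /\ (b1 - b2) * d1 = 0.
  apply: (qnorm_mul_eq0 F2 qnx_neq0).
    by move/eqP: e1; rewrite -subr_eq0 => /eqP <-; ring.
  by move/eqP: e2; rewrite -subr_eq0 => /eqP <-; ring.
have : (b1 - b2) ^+ 2 = 0.
  by rewrite -[LHS]mulr1 -qn1 -qnormZ eb1 eb2 /qnorm; ring.
by move/eqP; rewrite expf_eq0 subr_eq0 => /eqP ->.
Qed.

Lemma Ggroup_free M1 M2 x0 x1 x2 x3 x4 :
  M1 \in Ggroup alpha -> M2 \in Ggroup alpha -> (x3 != 0) || (x4 != 0) ->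
  M1 *m cv5 x0 x1 x2 x3 x4 = M2 *m cv5 x0 x1 x2 x3 x4 -> M1 = M2.
Proof.
case/GgroupP => a1 [b1 [c1 [d1 [a1_neq0 qn1 ->]]]].
case/GgroupP => a2 [b2 [c2 [d2 [a2_neq0 qn2 ->]]]] x34_neq0.
by move/(Mabcd_free a1_neq0 a2_neq0 qn1 qn2 x34_neq0) => [-> -> -> ->].
Qed.

Lemma card_Ggroup : #|Ggroup alpha| = ((#|F| - 1) * #|F| * #|F|.+1)%N.
Proof.
pose D := setX (setX [set~ 0 : F] [set: F]) [set cd : F * F | qnorm alpha cd.1 cd.2 == 1].
pose f (x : (F * F) * (F * F)) := Mabcd alpha x.1.1 x.1.2 x.2.1 x.2.2.
have -> : Ggroup alpha = f @: D.
  apply/setP => M; apply/GgroupP/imsetP => [[a [b [c [d [a_neq0 qn1 ->]]]]] | ].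
    by exists ((a, b), (c, d)); rewrite // !inE a_neq0 qn1 eqxx.
  case=> -[[a b] [c d]]; rewrite !inE /= andbT => /andP [a_neq0 /eqP qn1] ->.
  by exists a, b, c, d.
rewrite card_in_imset; last first.
  move=> [[a1 b1] [c1 d1]] [[a2 b2] [c2 d2]]; rewrite !inE /= !andbT.
  case/andP => a1_neq0 /eqP qn1 /andP [a2_neq0 /eqP qn2] /(congr1 (mulmx^~ (cv5 0 0 0 1 0))).
  by move/(Mabcd_free a1_neq0 a2_neq0 qn1 qn2); rewrite oner_neq0 => /(_ isT) [-> -> -> ->].
by rewrite !cardsX cardsT cardsC1 (card_qnorm1 F2 alpha_irr) subn1.
Qed.

End MatrixGroup.

Section StandardLines.

Variable F : finFieldType.

Definition line_pt (p r : F) := cv5 1 p 0 0 r.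
Definition line_dir := cv5 0 0 1 1 (0 : F).
Definition std_line (p r : F) : {set 'cV[F]_5} :=
  [set a *: line_pt p r + b *: line_dir | a : F, b : F].

Lemma std_lineP p r y : y \in std_line p r -> exists s t, y = cv5 s (s * p) t t (s * r).
Proof.
case/imset2P => s t _ _ ->; exists s, t.
by rewrite cv5_lin !mulr1 !mulr0 !addr0 !add0r.
Qed.

Lemma mem_line_pt p r : line_pt p r \in std_line p r.
Proof. by apply/imset2P; exists 1 0; rewrite ?inE // scale1r scale0r addr0. Qed.

Lemma mem_line_dir p r : line_dir \in std_line p r.
Proof. by apply/imset2P; exists 0 1; rewrite ?inE // scale1r scale0r add0r. Qed.

Lemma mem0_std_line p r : 0 \in std_line p r.
Proof. by apply/imset2P; exists 0 0; rewrite ?inE // !scale0r addr0. Qed.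

Lemma line_dir_neq0 : line_dir != 0.
Proof. by apply/eqP; rewrite -cv5_0 => /cv5_inj [_ _ /eqP]; rewrite oner_eq0. Qed.

(* Rows 0 and 2 of the 5 x 2 matrix form the identity, so it has a left inverse. *)
Lemma std_line_is_line p r : is_line (std_line p r).
Proof.
exists (line_pt p r), line_dir; split => //; apply/eqP.
rewrite eqn_leq rank_leq_col /=.
pose P : 'M[F]_(2, 5) := \matrix_(i < 2, j < 5) (j == (i : nat).*2 :> nat)%:R.
have PK : P *m row_mx (line_pt p r) line_dir = 1%:M.
  apply/matrixP => i j; rewrite !mxE !big_ord_recl big_ord0.
  case: (split_ordP j) => j0 ->; rewrite (ord1 j0) ?row_mxEl ?row_mxEr !mxE /=;
    by case: i => -[|[|i]] lt_i2 //=; ring.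
by rewrite -[X in (X <= _)%N](mxrank1 F 2) -PK mxrankM_maxr.
Qed.

End StandardLines.

Lemma act_line1 (F : finFieldType) (S : {set 'cV[F]_5}) : act_line 1%:M S = S.
Proof. by rewrite /act_line; under eq_imset do rewrite mul1mx; rewrite imset_id. Qed.

Section StandardLineOrbits.

Variables (F : finFieldType) (alpha : F).
Hypothesis F2 : 2%N \in [pchar F].
Hypothesis alpha_irr : irreducible_poly ('X^2 + 'X + alpha%:P).
Variables (p r : F).
Hypothesis r_neq0 : r != 0.

Let G := Ggroup alpha.
Let L := std_line p r.

Lemma Ggroup_std_line_eq M1 M2 y1 y2 : M1 \in G -> M2 \in G -> y1 \in L -> y2 \in L ->
  M1 *m y1 = M2 *m y2 -> y1 = y2.
Proof.
move=> GM1 GM2 /std_lineP [s1 [t1 ->]] /std_lineP [s2 [t2 ->]].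
have [u1 [u2 [u3 [u4 [-> qf1]]]]] := Ggroup_mul_cv5 F2 s1 (s1 * p) t1 t1 (s1 * r) GM1.
have [w1 [w2 [w3 [w4 [-> qf2]]]]] := Ggroup_mul_cv5 F2 s2 (s2 * p) t2 t2 (s2 * r) GM2.
case/cv5_inj => es eu1 eu2 eu3 eu4; subst s2.
suff /(sqrf_inj F2) -> : t1 ^+ 2 = t2 ^+ 2 by [].
apply: (addrI (s1 * p * (s1 * r))).
by rewrite !expr2 -qf1 -qf2 eu1 eu2 eu3 eu4.
Qed.

Lemma Ggroup_std_line_free M1 M2 y1 y2 : M1 \in G -> M2 \in G -> y1 \in L -> y2 \in L ->
  M1 *m y1 = M2 *m y2 -> M1 *m y1 != 0 -> M1 = M2.
Proof.
move=> GM1 GM2 Ly1 Ly2 eM; have ey := Ggroup_std_line_eq GM1 GM2 Ly1 Ly2 eM.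
rewrite -ey in eM; move: Ly1 eM => /std_lineP [s [t ->]] eM y_neq0.
apply: (Ggroup_free F2 alpha_irr GM1 GM2 _ eM).
apply: contraNT y_neq0; rewrite negb_or !negbK mulf_eq0 (negbTE r_neq0) orbF.
by case/andP => /eqP-> /eqP->; rewrite !mul0r cv5_0 mulmx0.
Qed.

Lemma card_std_line_orbit : #|line_orbit G L| = #|G|.
Proof.
rewrite card_in_imset // => M1 M2 GM1 GM2 eL.
have : M1 *m line_pt p r \in act_line M2 L by rewrite -eL; apply/imset_f/mem_line_pt.
case/imsetP => y Ly eM; apply: (Ggroup_std_line_free GM1 GM2 (mem_line_pt p r) Ly eM).
case/GgroupP: GM1 => a [b [c [d [_ _ ->]]]]; rewrite Mabcd_mul.
by apply/eqP; rewrite -cv5_0 => /cv5_inj [/eqP]; rewrite oner_eq0.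
Qed.

Lemma std_line_orbit_disjoint L1 L2 : L1 \in line_orbit G L -> L2 \in line_orbit G L ->
  L1 != L2 -> disjoint_lines L1 L2.
Proof.
case/imsetP => M1 GM1 -> /imsetP [M2 GM2 ->] neqL; apply/setP => x.
rewrite inE in_set1; apply/andP/eqP => [[/imsetP [y1 Ly1 ->] /imsetP [y2 Ly2 eM]] | ->].
  apply/eqP; apply: contraNT neqL => y_neq0.
  by rewrite (Ggroup_std_line_free GM1 GM2 Ly1 Ly2 eM y_neq0).
by split; apply/imsetP; exists 0; rewrite ?mulmx0 ?mem0_std_line.
Qed.

Lemma std_line_orbit_inj p' r' :
  line_orbit G L = line_orbit G (std_line p' r') -> (p, r) = (p', r').
Proof.
move=> eO; have : std_line p' r' \in line_orbit G L.
  by rewrite eO; apply/imsetP; exists 1%:M; rewrite ?act_line1 ?Ggroup1.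
case/imsetP => M GM eL.
have : line_dir F \in act_line M L by rewrite -eL mem_line_dir.
case/imsetP => y Ly eM.
have M1 : M = 1%:M.
  apply: (Ggroup_std_line_free GM (Ggroup1 alpha) Ly (mem_line_dir p r)); first by rewrite -eM mul1mx.
  by rewrite -eM line_dir_neq0.
move: (mem_line_pt p' r'); rewrite eL M1 act_line1 => /std_lineP [s [t]].
by case/cv5_inj => <- -> _ _ ->; rewrite !mul1r.
Qed.

End StandardLineOrbits.

Unset Implicit Arguments.
Theorem proposition3p4 (h : nat) (F : finFieldType) (alpha : F) :
  (0 < h)%N -> #|F| = (2 ^ h)%N ->
  irreducible_poly ('X^2 + 'X + alpha%:P) ->
  exists Os : {set {set {set 'cV[F]_5}}},
    #|Os| = ((2 ^ h) ^ 2 - 2 ^ h)%N /\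
    forall O, O \in Os ->
      (exists L, is_line L /\ O = line_orbit (Ggroup alpha) L) /\
      #|O| = ((2 ^ h) ^ 3 - 2 ^ h)%N /\
      (forall L1 L2, L1 \in O -> L2 \in O -> L1 != L2 -> disjoint_lines L1 L2).
Proof.
move=> _ cardF alpha_irr; have F2 := card_finPcharP cardF (isT : prime 2).
pose params := [set pr : F * F | pr.2 != 0].
exists [set line_orbit (Ggroup alpha) (std_line pr.1 pr.2) | pr in params]; split.
  rewrite card_in_imset => [|[p r] [p' r']]; last first.
    by rewrite inE => r_neq0 _ /(std_line_orbit_inj F2 alpha_irr r_neq0).
  have -> : params = setX [set: F] [set~ 0] by apply/setP => -[p r]; rewrite !inE.
  by rewrite cardsX cardsT cardsC1 cardF; nia.
move=> O /imsetP [[p r]]; rewrite inE /= => r_neq0 ->; split.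
  by exists (std_line p r); split; first exact: std_line_is_line.
split; last exact: std_line_orbit_disjoint.
by rewrite card_std_line_orbit // card_Ggroup // cardF; nia.
Qed.
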